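(* In the generic model, for $a\in\mathbb R$ let $\mathcal P_a:=\mathrm{ev}_a\circ\mathcal P\colon H_R\to\mathbb R$. Then for all $a,b\in\mathbb R$, $$\mathcal P_a\star\mathcal P_b=\mathcal P_{a+b},$$ i.e. $\sum_w\mathcal P(w_1)(a)\,\mathcal P(w_2)(b)=\mathcal P(w)(a+b)$ for every $w\in H_R$.
   Context: Generic model: $f\colon[0,\infty)\to\mathbb R$ continuous with $f(\zeta)-c/\zeta=O(\zeta^{-1-\epsilon})$ at infinity; Mellin transform $F(z)=\int_0^\infty f(\zeta)\zeta^{-z}d\zeta$, meromorphic near $0$. $H_R$: Connes–Kreimer Hopf algebra of rooted trees with coproduct $\Delta w=\sum_w w_1\otimes w_2$ (determined by $\Delta\circ B_+=B_+\otimes\mathbb 1+(\mathrm{id}\otimes B_+)\circ\Delta$), antipode $S$. $\phi_s(w)=s^{-z|w|}\prod_{v}F(z|w_v|)$ multiplicative; $\phi_{R,s}=\phi_\mu^{\star-1}\star\phi_s$ for fixed $\mu>0$; $\mathcal P(w)\in\mathbb R[x]$ is the polynomial with $\lim_{z\to0}\phi_{R,s}(w)=\mathcal P(w)(\ln\frac s\mu)$. Convolution of functionals: $\alpha\star\beta=m\circ(\alpha\otimes\beta)\circ\Delta$. *)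

From Stdlib Require Import Reals Lra List.
Import ListNotations.
Open Scope R_scope.

Inductive tree : Type := Node : list tree -> tree.
(* Node ts = B_+(ts) *)
Definition forest := list tree.   (* a monomial t1 ... tn of H_R; [] = 1 *)

Fixpoint tsize (t : tree) : nat :=
  match t with
  | Node ts => S ((fix fs (l : list tree) : nat :=
                    match l with [] => 0%nat | u :: l' => (tsize u + fs l')%nat end) ts)
  end.

Definition fsize (w : forest) : nat := fold_right (fun t acc => (tsize t + acc)%nat) 0%nat w.

Fixpoint subtree_sizes (t : tree) : list nat :=
  match t with
  | Node ts => tsize t :: (fix g (l : list tree) : list nat :=
                             match l with [] => [] | u :: l' => subtree_sizes u ++ g l' end) ts
  end.

Definition fsubtree_sizes (w : forest) : list nat := flat_map subtree_sizes w.

(** Coproduct, as a list (with multiplicity) of terms w1 ⊗ w2. *)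
Definition prod_coprod (A B : list (forest * forest)) : list (forest * forest) :=
  flat_map (fun p => map (fun q => (fst p ++ fst q, snd p ++ snd q)) B) A.

(* Δ B_+(f) = B_+(f) ⊗ 1 + (id ⊗ B_+) Δ f,  Δ multiplicative, Δ 1 = 1 ⊗ 1 *)
Fixpoint coprod_tree (t : tree) : list (forest * forest) :=
  match t with
  | Node ts =>
      ([t], []) ::
      map (fun p => (fst p, [Node (snd p)]))
        ((fix g (l : list tree) : list (forest * forest) :=
            match l with
            | [] => [([], [])]
            | u :: l' => prod_coprod (coprod_tree u) (g l')
            end) ts)
  end.

Definition coprod (w : forest) : list (forest * forest) :=
  fold_right (fun t acc => prod_coprod (coprod_tree t) acc) [([], [])] w.

Definition sumR (l : list R) : R := fold_right Rplus 0 l.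
Definition prodR (l : list R) : R := fold_right Rmult 1 l.

Definition conv (alpha beta : forest -> R) (w : forest) : R :=
  sumR (map (fun p => alpha (fst p) * beta (snd p)) (coprod w)).

(** Convolution inverse α^{⋆-1} of a functional with α(1) = 1, defined by
    α^{⋆-1}(1) = 1 and Σ_(w) α^{⋆-1}(w1) α(w2) = 0 for w ≠ 1, i.e.
    α^{⋆-1}(w) = - Σ_{(w), w2 ≠ 1} α^{⋆-1}(w1) α(w2)   (|w1| < |w| there).
    Fuel = number of vertices, which suffices. *)
Fixpoint conv_inv_fuel (n : nat) (alpha : forest -> R) (w : forest) : R :=
  match w with
  | [] => 1
  | _ :: _ =>
      match n with
      | O => 0
      | S n' => - sumR (map (fun p => match snd p with
                                     | [] => 0
                                     | _ :: _ => conv_inv_fuel n' alpha (fst p) * alpha (snd p)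
                                     end) (coprod w))
      end
  end.

Definition conv_inv (alpha : forest -> R) (w : forest) : R :=
  conv_inv_fuel (fsize w) alpha w.

Definition phi (F : R -> R) (s z : R) (w : forest) : R :=
  Rpower s (- z * INR (fsize w)) * prodR (map (fun k => F (z * INR k)) (fsubtree_sizes w)).

Definition phiR (F : R -> R) (mu s z : R) (w : forest) : R :=
  conv (conv_inv (phi F mu z)) (phi F s z) w.

(** Real polynomials as coefficient lists (constant term first). *)
Definition peval (p : list R) (x : R) : R := fold_right (fun c acc => c + x * acc) 0 p.

Definition cont_nonneg (f : R -> R) : Prop :=
  forall x, 0 <= x -> forall eps, 0 < eps -> exists delta, 0 < delta /\
    forall y, 0 <= y -> Rabs (y - x) < delta -> Rabs (f y - f x) < eps.

Definition improper_integral_0_inf (g : R -> R) (l : R) : Prop :=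
  forall eps, 0 < eps -> exists delta M, 0 < delta /\ delta < M /\
    forall a b, 0 < a < delta -> M < b ->
      exists pr : Riemann_integrable g a b, Rabs (RiemannInt pr - l) < eps.

Definition is_mellin (f F : R -> R) : Prop :=
  forall z, 0 < z < 1 -> improper_integral_0_inf (fun x => f x * Rpower x (- z)) (F z).

Definition lim_0_right (g : R -> R) (l : R) : Prop :=
  forall eps, 0 < eps -> exists delta, 0 < delta /\
    forall z, 0 < z < delta -> Rabs (g z - l) < eps.

(** Fix the regulator z and put ψ := φ_μ (at z), L := ψ^{⋆-1}.  Rescaling the
    external scale s = μ e^x multiplies ψ by the grading character,
    φ_{μe^x} = θ_{e^{-zx}} ψ with θ_c g (w) = c^{|w|} g(w).  As Δ preserves
    the number of vertices, θ_c is an automorphism of the convolution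
    algebra; together with coassociativity, the counit and the fact that L is
    a two-sided inverse of ψ this gives the exact identity
        L ⋆ θ_{cd} ψ = (L ⋆ θ_c ψ) ⋆ θ_c (L ⋆ θ_d ψ),
    i.e. φ_{R,μe^{a+b}}(w) = Σ_(w) φ_{R,μe^a}(w1) e^{-za|w2|} φ_{R,μe^b}(w2).
    Letting z → 0+ (where e^{-za|w2|} → 1 and φ_{R,μe^x}(w) → P(w)(x)) gives
    P_a ⋆ P_b = P_{a+b} on forests, and the theorem follows by linearity. *)

From Stdlib Require Import Reals List Lra Lia Wf_nat.
Import ListNotations.
Open Scope R_scope.

Definition lsum {A} (l : list A) (f : A -> R) : R := sumR (map f l).

Lemma lsum_nil {A} (f : A -> R) : lsum [] f = 0.
Proof. reflexivity. Qed.

Lemma lsum_cons {A} (x : A) l f : lsum (x :: l) f = f x + lsum l f.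
Proof. reflexivity. Qed.

Lemma lsum_app {A} (l1 l2 : list A) f : lsum (l1 ++ l2) f = lsum l1 f + lsum l2 f.
Proof.
  induction l1 as [|x l1 IH]; simpl.
  - rewrite lsum_nil; ring.
  - rewrite !lsum_cons, IH; ring.
Qed.

Lemma lsum_ext_in {A} (l : list A) f g :
  (forall x, In x l -> f x = g x) -> lsum l f = lsum l g.
Proof.
  intro H; induction l as [|x l IH]; auto.
  rewrite !lsum_cons, IH, H; simpl; auto.
  intros y Hy; apply H; simpl; auto.
Qed.

Lemma lsum_ext {A} (l : list A) f g : (forall x, f x = g x) -> lsum l f = lsum l g.
Proof. intro H; apply lsum_ext_in; auto. Qed.

Lemma lsum_map {A B} (h : A -> B) l f : lsum (map h l) f = lsum l (fun x => f (h x)).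
Proof. induction l as [|x l IH]; auto. simpl map; rewrite !lsum_cons, IH; auto. Qed.

Lemma lsum_flat_map {A B} (g : A -> list B) l f :
  lsum (flat_map g l) f = lsum l (fun x => lsum (g x) f).
Proof. induction l as [|x l IH]; auto. simpl flat_map; rewrite lsum_app, lsum_cons, IH; auto. Qed.

Lemma lsum_plus {A} (l : list A) f g : lsum l (fun x => f x + g x) = lsum l f + lsum l g.
Proof. induction l as [|x l IH]; [rewrite !lsum_nil; ring|]. rewrite !lsum_cons, IH; ring. Qed.

Lemma lsum_zero {A} (l : list A) : lsum l (fun _ => 0) = 0.
Proof. induction l as [|x l IH]; auto. rewrite lsum_cons, IH; ring. Qed.

Lemma lsum_mult_r {A} (l : list A) f c : lsum l f * c = lsum l (fun x => f x * c).
Proof. induction l as [|x l IH]; [rewrite !lsum_nil; ring|]. rewrite !lsum_cons, <- IH; ring. Qed.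

Lemma lsum_mult_l {A} (l : list A) f c : c * lsum l f = lsum l (fun x => c * f x).
Proof. induction l as [|x l IH]; [rewrite !lsum_nil; ring|]. rewrite !lsum_cons, <- IH; ring. Qed.

Lemma lsum_swap {A B} (l : list A) (m : list B) f :
  lsum l (fun x => lsum m (fun y => f x y)) = lsum m (fun y => lsum l (fun x => f x y)).
Proof.
  induction l as [|x l IH]; [rewrite lsum_nil, lsum_zero; auto|].
  rewrite lsum_cons, IH, <- lsum_plus. apply lsum_ext; intro; rewrite lsum_cons; auto.
Qed.

Definition tree_forall_ind (P : tree -> Prop)
  (H : forall ts, Forall P ts -> P (Node ts)) : forall t, P t :=
  fix ind t := match t with
    Node ts => H ts ((fix all l := match l return Forall P l with
                        | [] => Forall_nil _
                        | u :: l' => Forall_cons _ (ind u) (all l') end) ts) end.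

Lemma coprod_cons t w : coprod (t :: w) = prod_coprod (coprod_tree t) (coprod w).
Proof. reflexivity. Qed.

Lemma coprod_node ts : coprod_tree (Node ts) =
  ([Node ts], []) :: map (fun p => (fst p, [Node (snd p)])) (coprod ts).
Proof. reflexivity. Qed.

Lemma lsum_prod_coprod A B f : lsum (prod_coprod A B) f =
  lsum A (fun p => lsum B (fun q => f (fst p ++ fst q, snd p ++ snd q))).
Proof. unfold prod_coprod. rewrite lsum_flat_map. apply lsum_ext; intro; apply lsum_map. Qed.

Lemma lsum_coprod_nil (f : forest * forest -> R) : lsum (coprod []) f = f ([], []).
Proof. unfold lsum; simpl; ring. Qed.

Lemma lsum_coprod_app u v f : lsum (coprod (u ++ v)) f =
  lsum (coprod u) (fun p => lsum (coprod v) (fun q => f (fst p ++ fst q, snd p ++ snd q))).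
Proof.
  revert f; induction u as [|t u IH]; intro f.
  - rewrite lsum_coprod_nil. apply lsum_ext; intros [x y]; reflexivity.
  - change ((t :: u) ++ v) with (t :: (u ++ v)). rewrite !coprod_cons, !lsum_prod_coprod.
    apply lsum_ext; intro p. rewrite IH. apply lsum_ext; intro q. apply lsum_ext; intro r.
    simpl. rewrite !app_assoc; reflexivity.
Qed.

Lemma lsum_coprod_single t f : lsum (coprod [t]) f = lsum (coprod_tree t) f.
Proof.
  rewrite coprod_cons, lsum_prod_coprod. apply lsum_ext; intros [x y].
  rewrite lsum_coprod_nil; simpl. rewrite !app_nil_r; auto.
Qed.

Lemma coprod_ind (Q : forest -> list (forest * forest) -> Prop) :
  Q [] (coprod []) ->
  (forall u v A B, Q u A -> Q v B -> Q (u ++ v) (prod_coprod A B)) ->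
  (forall ts, Q ts (coprod ts) -> Q [Node ts] (coprod_tree (Node ts))) ->
  forall w, Q w (coprod w).
Proof.
  intros Hunit Hmul Hnode.
  assert (Hforest : forall w, Forall (fun t => Q [t] (coprod_tree t)) w -> Q w (coprod w)).
  { induction 1 as [|t w Ht _ IH]; [exact Hunit | exact (Hmul [t] w _ _ Ht IH)]. }
  assert (Htree : forall t, Q [t] (coprod_tree t)).
  { apply tree_forall_ind; intros ts H. apply Hnode, Hforest, H. }
  intro w; apply Hforest, Forall_forall; intros; apply Htree.
Qed.

(** Coassociativity (Δ ⊗ id) Δ = (id ⊗ Δ) Δ, tested against every
    trilinear functional F. *)
Definition coassoc_on (D : list (forest * forest)) : Prop :=
  forall F : forest -> forest -> forest -> R,
  lsum D (fun p => lsum (coprod (fst p)) (fun q => F (fst q) (snd q) (snd p))) =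
  lsum D (fun p => lsum (coprod (snd p)) (fun q => F (fst p) (fst q) (snd q))).

Lemma coassoc_prod A B : coassoc_on A -> coassoc_on B -> coassoc_on (prod_coprod A B).
Proof.
  intros HA HB F. rewrite !lsum_prod_coprod.
  transitivity (lsum A (fun p => lsum (coprod (fst p)) (fun q => lsum B (fun p' =>
     lsum (coprod (fst p')) (fun q' =>
       F (fst q ++ fst q') (snd q ++ snd q') (snd p ++ snd p')))))).
  { apply lsum_ext; intro p. rewrite lsum_swap. apply lsum_ext; intro p'.
    simpl. rewrite lsum_coprod_app. auto. }
  rewrite (HA (fun x y z => lsum B (fun p' => lsum (coprod (fst p')) (fun q' =>
     F (x ++ fst q') (y ++ snd q') (z ++ snd p'))))).
  apply lsum_ext; intro p. simpl.
  transitivity (lsum (coprod (snd p)) (fun x => lsum B (fun p' =>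
     lsum (coprod (snd p')) (fun q => F (fst p ++ fst p') (fst x ++ fst q) (snd x ++ snd q))))).
  { apply lsum_ext; intro x. apply (HB (fun y z w => F (fst p ++ y) (fst x ++ z) (snd x ++ w))). }
  rewrite lsum_swap. apply lsum_ext; intro p'. rewrite lsum_coprod_app. auto.
Qed.

Lemma coassoc_node ts : coassoc_on (coprod ts) -> coassoc_on (coprod_tree (Node ts)).
Proof.
  intros H F. rewrite coprod_node, !lsum_cons, !lsum_map. cbn [fst snd].
  rewrite lsum_coprod_single, coprod_node, lsum_cons, lsum_map, lsum_coprod_nil. cbn [fst snd].
  pose proof (H (fun x y z => F x y [Node z])) as E. cbn beta in E.
  unfold forest in *. rewrite E, Rplus_assoc. f_equal.
  rewrite <- lsum_plus. apply lsum_ext; intro p.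
  rewrite lsum_coprod_single, coprod_node, lsum_cons, lsum_map. auto.
Qed.

Lemma coassoc w : coassoc_on (coprod w).
Proof.
  apply (coprod_ind (fun _ D => coassoc_on D)).
  - intro F; reflexivity.
  - intros; apply coassoc_prod; auto.
  - apply coassoc_node.
Qed.

Definition eps (w : forest) : R := match w with [] => 1 | _ :: _ => 0 end.

Lemma eps_app u v : eps (u ++ v) = eps u * eps v.
Proof. destruct u, v; simpl; ring. Qed.

Definition left_counit_on (u : forest) (D : list (forest * forest)) : Prop :=
  forall G : forest -> forest -> R, lsum D (fun p => eps (fst p) * G (fst p) (snd p)) = G [] u.

Definition right_counit_on (u : forest) (D : list (forest * forest)) : Prop :=
  forall G : forest -> forest -> R, lsum D (fun p => G (fst p) (snd p) * eps (snd p)) = G u [].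

Lemma left_counit w : left_counit_on w (coprod w).
Proof.
  apply coprod_ind.
  - intro G; rewrite lsum_coprod_nil; simpl; ring.
  - intros u v A B HA HB G. rewrite lsum_prod_coprod.
    transitivity (lsum A (fun p => eps (fst p) * G (fst p ++ []) (snd p ++ v))).
    + apply lsum_ext; intro p.
      rewrite <- (HB (fun x y => G (fst p ++ x) (snd p ++ y))), lsum_mult_l.
      apply lsum_ext; intro q. simpl. rewrite eps_app; ring.
    + apply (HA (fun x y => G (x ++ []) (y ++ v))).
  - intros ts H G. rewrite coprod_node, lsum_cons, lsum_map. cbn [fst snd eps].
    pose proof (H (fun x y => G x [Node y])) as E. cbn beta in E.
    unfold forest in *. rewrite E. ring.
Qed.

Lemma right_counit w : right_counit_on w (coprod w).
Proof.
  apply coprod_ind.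
  - intro G; rewrite lsum_coprod_nil; simpl; ring.
  - intros u v A B HA HB G. rewrite lsum_prod_coprod.
    transitivity (lsum A (fun p => G (fst p ++ v) (snd p ++ []) * eps (snd p))).
    + apply lsum_ext; intro p.
      rewrite <- (HB (fun x y => G (fst p ++ x) (snd p ++ y))), lsum_mult_r.
      apply lsum_ext; intro q. simpl. rewrite eps_app; ring.
    + apply (HA (fun x y => G (x ++ v) (y ++ []))).
  - intros ts _ G. rewrite coprod_node, lsum_cons, lsum_map. simpl.
    rewrite (lsum_ext _ _ (fun _ => 0)), lsum_zero by (intro; simpl; ring). ring.
Qed.

Definition graded_on (u : forest) (D : list (forest * forest)) : Prop :=
  forall p, In p D -> (fsize (fst p) + fsize (snd p))%nat = fsize u.

Lemma fsize_app u v : fsize (u ++ v) = (fsize u + fsize v)%nat.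
Proof. induction u as [|t u IH]; simpl; auto. unfold fsize in *; simpl; rewrite IH; lia. Qed.

Lemma in_prod_coprod p A B : In p (prod_coprod A B) ->
  exists a b, In a A /\ In b B /\ p = (fst a ++ fst b, snd a ++ snd b).
Proof.
  unfold prod_coprod. rewrite in_flat_map. intros [a [Ha Hp]].
  apply in_map_iff in Hp. destruct Hp as [b [<- Hb]]. eauto.
Qed.

Lemma coprod_graded w : graded_on w (coprod w).
Proof.
  apply coprod_ind.
  - intros p [<-|[]]; reflexivity.
  - intros u v A B HA HB p Hp. apply in_prod_coprod in Hp.
    destruct Hp as [a [b [Ha [Hb ->]]]]. simpl. rewrite !fsize_app.
    apply HA in Ha. apply HB in Hb. lia.
  - intros ts H p [<-|Hp].
    + simpl; lia.
    + apply in_map_iff in Hp. destruct Hp as [q [<- Hq]]. apply H in Hq. cbn [fst snd].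
      change (fsize [Node (snd q)]) with (S (fsize (snd q)) + 0)%nat.
      change (fsize [Node ts]) with (S (fsize ts) + 0)%nat. unfold forest in *. lia.
Qed.

Lemma conv_lsum a b w : conv a b w = lsum (coprod w) (fun p => a (fst p) * b (snd p)).
Proof. reflexivity. Qed.

Lemma conv_ext a a' b b' w : (forall x, a x = a' x) -> (forall x, b x = b' x) ->
  conv a b w = conv a' b' w.
Proof. intros Ha Hb. rewrite !conv_lsum. apply lsum_ext; intro; rewrite Ha, Hb; auto. Qed.

Lemma conv_assoc a b c w : conv (conv a b) c w = conv a (conv b c) w.
Proof.
  rewrite !conv_lsum.
  transitivity (lsum (coprod w) (fun p =>
    lsum (coprod (fst p)) (fun q => a (fst q) * b (snd q) * c (snd p)))).
  { apply lsum_ext; intro p. rewrite conv_lsum, lsum_mult_r. auto. }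
  rewrite (coassoc w (fun x y z => a x * b y * c z)).
  apply lsum_ext; intro p. rewrite conv_lsum, lsum_mult_l. apply lsum_ext; intro; ring.
Qed.

Lemma conv_eps_l b w : conv eps b w = b w.
Proof. exact (left_counit w (fun _ y => b y)). Qed.

Lemma conv_eps_r a w : conv a eps w = a w.
Proof. exact (right_counit w (fun x _ => a x)). Qed.

(** The grading automorphism θ_c g (w) = c^{|w|} g(w); since Δ preserves
    size, θ_c is multiplicative for convolution. *)
Definition dilate (c : R) (g : forest -> R) (w : forest) : R := c ^ fsize w * g w.

Lemma conv_dilate c a b w : conv (dilate c a) (dilate c b) w = dilate c (conv a b) w.
Proof.
  unfold dilate. rewrite !conv_lsum, lsum_mult_l. apply lsum_ext_in; intros p Hp.
  rewrite <- (coprod_graded w p Hp), pow_add. ring.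
Qed.

Lemma dilate_eps c w : dilate c eps w = eps w.
Proof. unfold dilate; destruct w; simpl; ring. Qed.

Lemma dilate_dilate c d g w : dilate c (dilate d g) w = dilate (c * d) g w.
Proof. unfold dilate. rewrite Rpow_mult_distr. ring. Qed.

(** Splitting off the term w ⊗ 1 of the coproduct; all other terms have a
    nonempty right factor, hence a left factor of smaller size. *)
Lemma lsum_coprod_split w G :
  lsum (coprod w) G = G (w, []) + lsum (coprod w) (fun p => G p * (1 - eps (snd p))).
Proof.
  pose proof (right_counit w (fun x y => G (x, y))) as E. cbn beta in E.
  unfold forest in *. rewrite <- E, <- lsum_plus.
  apply lsum_ext; intros [x y]; simpl; ring.
Qed.

Lemma fsize_pos w : w <> [] -> (1 <= fsize w)%nat.
Proof. destruct w as [|[ts] w]; [congruence|]. intros _. unfold fsize; simpl. lia. Qed.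

Lemma fsize_fst_lt w p : In p (coprod w) -> snd p <> [] -> (fsize (fst p) < fsize w)%nat.
Proof. intros Hp Hne. apply coprod_graded in Hp. apply fsize_pos in Hne. lia. Qed.

Lemma conv_left_unit_unique a g :
  a [] = 1 -> (forall w, conv g a w = a w) -> forall w, g w = eps w.
Proof.
  intros Ha Hg w. remember (fsize w) as n eqn:Hn. revert w Hn.
  induction n as [n IH] using lt_wf_ind. intros w Hn. specialize (Hg w).
  rewrite conv_lsum, lsum_coprod_split in Hg. cbn [fst snd] in Hg. rewrite Ha in Hg.
  destruct w as [|t w].
  - rewrite lsum_coprod_nil in Hg. simpl in *. lra.
  - rewrite (lsum_ext_in _ _ (fun p => eps (fst p) * (a (snd p) * (1 - eps (snd p))))) in Hg.
    + pose proof (left_counit (t :: w) (fun _ y => a y * (1 - eps y))) as E. cbn beta in E.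
      unfold forest in *. rewrite E in Hg. simpl in *. lra.
    + intros [p1 [|t0 l]] Hp; cbn [fst snd eps]; [ring|].
      rewrite (IH (fsize p1)); [ring | | reflexivity].
      subst n; apply (fsize_fst_lt _ _ Hp); simpl; congruence.
Qed.

Lemma conv_right_inverse a l :
  a [] = 1 -> (forall w, conv l a w = eps w) -> forall w, conv a l w = eps w.
Proof.
  intros Ha Hl. apply (conv_left_unit_unique a); auto. intro w.
  rewrite conv_assoc, (conv_ext a a (conv l a) eps); auto. apply conv_eps_r.
Qed.

Lemma conv_inv_fuel_indep a : forall n m w, (fsize w <= n)%nat -> (fsize w <= m)%nat ->
  conv_inv_fuel n a w = conv_inv_fuel m a w.
Proof.
  induction n as [|n IH]; intros m [|t w] Hn Hm; try (destruct m; reflexivity).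
  - pose proof (fsize_pos (t :: w) ltac:(congruence)). lia.
  - destruct m as [|m]; [pose proof (fsize_pos (t :: w) ltac:(congruence)); lia|].
    cbn [conv_inv_fuel]. f_equal. apply (lsum_ext_in (coprod (t :: w))). intros [p1 [|t0 l]] Hp; cbn [fst snd]; auto.
    pose proof (fsize_fst_lt _ (p1, t0 :: l) Hp ltac:(simpl; congruence)). simpl in *.
    f_equal. apply IH; lia.
Qed.

Lemma conv_inv_left a : a [] = 1 -> forall w, conv (conv_inv a) a w = eps w.
Proof.
  intros Ha [|t w].
  - rewrite conv_lsum, lsum_coprod_nil. simpl. rewrite Ha. unfold conv_inv. simpl. ring.
  - rewrite conv_lsum, lsum_coprod_split. cbn [fst snd]. rewrite Ha.
    unfold conv_inv at 1. remember (fsize (t :: w)) as N. destruct N as [|N].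
    { pose proof (fsize_pos (t :: w) ltac:(congruence)). lia. }
    cbn [conv_inv_fuel eps].
    match goal with |- - ?X * 1 + ?Y = 0 => replace Y with X; [ring|] end.
    apply lsum_ext_in. intros [p1 [|t0 l]] Hp; cbn [fst snd eps]; [ring|].
    pose proof (fsize_fst_lt _ (p1, t0 :: l) Hp ltac:(simpl; congruence)). simpl in *.
    unfold conv_inv. rewrite (conv_inv_fuel_indep a N (fsize p1)) by lia. ring.
Qed.

(** Indeed the right side is L ⋆ (θ_c a ⋆ θ_c L) ⋆ θ_{cd} a, and
    θ_c a ⋆ θ_c L = θ_c (a ⋆ L) = θ_c ε = ε. *)
Lemma conv_inv_dilate_factor a c d w : a [] = 1 ->
  conv (conv_inv a) (dilate (c * d) a) w =
  conv (conv (conv_inv a) (dilate c a)) (dilate c (conv (conv_inv a) (dilate d a))) w.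
Proof.
  intro Ha. set (L := conv_inv a).
  assert (HL : forall w, conv L a w = eps w) by (apply conv_inv_left; auto).
  assert (Hdil : forall x, conv (dilate c a) (dilate c L) x = eps x).
  { apply conv_right_inverse.
    - unfold dilate; simpl; rewrite Ha; ring.
    - intro x. rewrite conv_dilate. unfold dilate at 1. rewrite HL. apply dilate_eps. }
  transitivity (conv (conv L (dilate c a)) (conv (dilate c L) (dilate (c * d) a)) w).
  2: { apply conv_ext; intro x; auto. rewrite <- conv_dilate.
       apply conv_ext; auto. intro; symmetry; apply dilate_dilate. }
  rewrite conv_assoc. apply conv_ext; auto. intro x.
  rewrite <- conv_assoc, (conv_ext _ eps _ (dilate (c * d) a)); auto.
  symmetry; apply conv_eps_l.
Qed.

Lemma phi_nil F s z : phi F s z [] = 1.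
Proof. unfold phi, Rpower, prodR. simpl. rewrite Rmult_0_r, Rmult_0_l, exp_0. ring. Qed.

Lemma exp_pow x n : exp x ^ n = exp (INR n * x).
Proof. rewrite <- Rpower_pow by apply exp_pos. unfold Rpower. rewrite ln_exp. reflexivity. Qed.

Lemma phi_rescale F mu x z w : 0 < mu ->
  phi F (mu * exp x) z w = dilate (exp (- z * x)) (phi F mu z) w.
Proof.
  intro Hmu. unfold phi, dilate, Rpower. rewrite ln_mult, ln_exp, exp_pow by auto using exp_pos.
  rewrite <- Rmult_assoc, <- exp_plus. f_equal. f_equal. ring.
Qed.

Lemma phiR_rescale F mu x z w : 0 < mu ->
  phiR F mu (mu * exp x) z w =
  conv (conv_inv (phi F mu z)) (dilate (exp (- z * x)) (phi F mu z)) w.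
Proof. intro Hmu. apply conv_ext; auto. intro; apply phi_rescale; auto. Qed.

Lemma phiR_factor F mu a b z w : 0 < mu ->
  phiR F mu (mu * exp (a + b)) z w =
  lsum (coprod w) (fun p => phiR F mu (mu * exp a) z (fst p) *
      (exp (- z * a) ^ fsize (snd p) * phiR F mu (mu * exp b) z (snd p))).
Proof.
  intro Hmu. rewrite phiR_rescale by auto.
  rewrite (conv_ext _ (conv_inv (phi F mu z)) _
             (dilate (exp (- z * a) * exp (- z * b)) (phi F mu z))); auto.
  2: { intro y. unfold dilate. rewrite <- exp_plus. do 3 f_equal. ring. }
  rewrite conv_inv_dilate_factor by apply phi_nil. rewrite conv_lsum.
  apply lsum_ext; intro p. rewrite !phiR_rescale; auto.
Qed.

Definition positive (z : R) : Prop := 0 < z.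

Lemma lim_0_right_limit1_in g l : lim_0_right g l -> limit1_in g positive l 0.
Proof.
  unfold lim_0_right, limit1_in, limit_in, positive; simpl; unfold R_dist.
  intros H e He. destruct (H e He) as [d [Hd Hg]]. exists d; split; auto.
  intros z [Hz Hzd]. apply Hg. rewrite Rminus_0_r, Rabs_pos_eq in Hzd; lra.
Qed.

Lemma positive_adherent : adhDa positive 0.
Proof.
  intros e He. exists (e / 2). unfold positive, Rdist.
  rewrite Rminus_0_r, Rabs_pos_eq; lra.
Qed.

Lemma limit_lsum {A} (l : list A) (f : R -> A -> R) L :
  (forall p, In p l -> limit1_in (fun z => f z p) positive (L p) 0) ->
  limit1_in (fun z => lsum l (f z)) positive (lsum l L) 0.
Proof.
  induction l as [|x l IH]; intro H.
  - exact (limit_free (fun _ => 0) positive 0 0).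
  - apply (limit_plus (fun z => f z x) (fun z => lsum l (f z))).
    + apply H; simpl; auto.
    + apply IH; intros; apply H; simpl; auto.
Qed.

Lemma limit_exp_pow a n : limit1_in (fun z => exp (- z * a) ^ n) positive 1 0.
Proof.
  assert (C : continuity_pt (fun z => exp (- z * a) ^ n) 0) by reg.
  replace 1 with (exp (- 0 * a) ^ n) by (rewrite Ropp_0, Rmult_0_l, exp_0, pow1; auto).
  apply (limit1_imp _ (D_x no_cond 0)); [|exact C].
  intros z Hz. unfold positive in Hz. split; [exact I | lra].
Qed.

(** The scaling law on a single forest: letting z → 0+ in phiR_factor,
    whose factors e^(-za|w2|) tend to 1, gives P_a ⋆ P_b = P_{a+b}. *)
Lemma scaling_law F mu (P : forest -> list R) (Hmu : 0 < mu)
  (HP : forall w s, 0 < s -> lim_0_right (fun z => phiR F mu s z w) (peval (P w) (ln (s / mu))))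
  a b w :
  conv (fun w => peval (P w) a) (fun w => peval (P w) b) w = peval (P w) (a + b).
Proof.
  assert (HPx : forall w x,
    limit1_in (fun z => phiR F mu (mu * exp x) z w) positive (peval (P w) x) 0).
  { intros v x. apply lim_0_right_limit1_in.
    assert (Hs : 0 < mu * exp x) by (pose proof (exp_pos x); nra).
    assert (Hln : ln (mu * exp x / mu) = x)
      by (replace (mu * exp x / mu) with (exp x) by (field; lra); apply ln_exp).
    pose proof (HP v _ Hs) as H. rewrite Hln in H. exact H. }
  apply (single_limit (fun z => phiR F mu (mu * exp (a + b)) z w) positive _ _ 0);
    [apply positive_adherent | | apply HPx].
  apply (limit1_ext (fun z => lsum (coprod w) (fun p => phiR F mu (mu * exp a) z (fst p) *
      (exp (- z * a) ^ fsize (snd p) * phiR F mu (mu * exp b) z (snd p))))).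
  { intros z _. symmetry. apply phiR_factor; auto. }
  rewrite conv_lsum.
  replace (lsum (coprod w) (fun p => peval (P (fst p)) a * peval (P (snd p)) b))
    with (lsum (coprod w) (fun p => peval (P (fst p)) a * (1 * peval (P (snd p)) b)))
    by (apply lsum_ext; intro; ring).
  apply limit_lsum; intros p _.
  apply (limit_mul (fun z => phiR F mu (mu * exp a) z (fst p))); [apply HPx|].
  apply (limit_mul (fun z => exp (- z * a) ^ fsize (snd p))); [apply limit_exp_pow | apply HPx].
Qed.

(** The
    hypotheses on f (continuity, decay, Mellin transform) only serve to make
    the limit P exist, which HP asserts; the identity follows from HP alone. *)
Theorem mainTheorem9 (f : R -> R) (c : R) (F : R -> R) (mu : R) (P : forest -> list R)
  (Hcont : cont_nonneg f)
  (Hdecay : exists eps K M, 0 < eps /\ 0 < M /\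
     forall x, M <= x -> Rabs (f x - c / x) <= K * Rpower x (- 1 - eps))
  (HF : is_mellin f F)
  (Hmu : 0 < mu)
  (HP : forall (w : forest) (s : R), 0 < s ->
     lim_0_right (fun z => phiR F mu s z w) (peval (P w) (ln (s / mu)))) :
  forall (a b : R) (h : list (R * forest)),
    sumR (map (fun p => fst p * conv (fun w => peval (P w) a) (fun w => peval (P w) b) (snd p)) h)
    = sumR (map (fun p => fst p * peval (P (snd p)) (a + b)) h).
Proof.
  intros a b h. f_equal. apply map_ext. intros [x w]. cbn [fst snd].
  rewrite (scaling_law F mu P Hmu HP). reflexivity.
Qed.
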